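(* Let $a\in\mathbb{D}\setminus\{0\}$ and let $\alpha,\beta,\gamma\in\mathbb{C}$ with $\alpha\ne0$, $\gamma\neq0$. If $g=\alpha z+\beta+\gamma K_a$ is $\mathcal{H}^2_{\omega}$-inner, then $g(a)=0$, $g(0)=0$ (i.e. $\beta+\gamma=0$), and $g$ is a unimodular constant multiple of $$B_2(z)=\frac{(1-K_a(a))z-a(1-K_a(z))}{\sqrt{(K_a(a)-1)\big((K_a(a)-1)\omega_1-|a|^2\big)}},$$ where the denominator equals $\|(1-K_a(a))z-a(1-K_a)\|_{\mathcal{H}^2_{\omega}}$.
   Context: Let $\omega=\{\omega_n\}_{n\geq 0}$ be a sequence of positive reals with $\omega_0=1$ and $\lim_{n\to\infty}\omega_{n+1}/\omega_n=1$. $\mathcal{H}^2_{\omega}$ is the Hilbert space of power series $f(z)=\sum_{n\ge0}a_nz^n$ with $\|f\|^2=\sum_{n\geq0}\omega_n|a_n|^2<\infty$ and inner product $\langle f,g\rangle=\sum_n\omega_na_n\overline{b_n}$; its reproducing kernel on $\mathbb{D}$ is $K_\lambda(z)=\sum_{n\ge0}\overline{\lambda}^nz^n/\omega_n$. A function $f$ is $\mathcal{H}^2_{\omega}$-inner if $\|f\|=1$ and $\langle z^mf,f\rangle=0$ for all integers $m\geq1$. *)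

From Stdlib Require Import Reals Lra Arith ClassicalEpsilon.
Open Scope R_scope.

Definition Cx : Type := (R * R)%type.
Definition RtoC (x : R) : Cx := (x, 0).
Definition C0 : Cx := (0, 0).
Definition C1 : Cx := (1, 0).
Definition Cadd (z w : Cx) : Cx := (fst z + fst w, snd z + snd w).
Definition Copp (z : Cx) : Cx := (- fst z, - snd z).
Definition Csub (z w : Cx) : Cx := Cadd z (Copp w).
Definition Cmul (z w : Cx) : Cx :=
  (fst z * fst w - snd z * snd w, fst z * snd w + snd z * fst w).
Definition Cconj (z : Cx) : Cx := (fst z, - snd z).
Definition Cnorm2 (z : Cx) : R := fst z * fst z + snd z * snd z.
Definition Cmod (z : Cx) : R := sqrt (Cnorm2 z).
Fixpoint Cpow (z : Cx) (n : nat) : Cx :=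
  match n with O => C1 | S k => Cmul z (Cpow z k) end.
Definition Cscal (r : R) (z : Cx) : Cx := (r * fst z, r * snd z).

Definition Csum_is (u : nat -> Cx) (s : Cx) : Prop :=
  infinite_sum (fun n => fst (u n)) (fst s) /\ infinite_sum (fun n => snd (u n)) (snd s).

Definition Rseries_val (u : nat -> R) : R :=
  epsilon (inhabits 0) (fun l => infinite_sum u l).

(** * The space H^2_omega: a power series is its coefficient sequence [f : nat -> Cx]. *)

Definition eval_is (f : nat -> Cx) (z : Cx) (s : Cx) : Prop :=
  Csum_is (fun n => Cmul (f n) (Cpow z n)) s.

Definition hnorm (w : nat -> R) (f : nat -> Cx) : R :=
  sqrt (Rseries_val (fun n => w n * Cnorm2 (f n))).

Definition inner_is (w : nat -> R) (f g : nat -> Cx) (c : Cx) : Prop :=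
  Csum_is (fun n => Cscal (w n) (Cmul (f n) (Cconj (g n)))) c.

Definition zshift (m : nat) (f : nat -> Cx) : nat -> Cx :=
  fun n => if Nat.leb m n then f (n - m)%nat else C0.

Definition is_inner (w : nat -> R) (f : nat -> Cx) : Prop :=
  infinite_sum (fun n => w n * Cnorm2 (f n)) 1 /\
  forall m : nat, (1 <= m)%nat -> inner_is w (zshift m f) f C0.

(** Reproducing kernel K_lambda(z) = sum conj(lambda)^n z^n / omega_n (coefficients). *)
Definition Kcoef (w : nat -> R) (lam : Cx) : nat -> Cx :=
  fun n => Cscal (/ w n) (Cpow (Cconj lam) n).

Definition zcoef : nat -> Cx := fun n => if Nat.eqb n 1 then C1 else C0.
Definition onecoef : nat -> Cx := fun n => if Nat.eqb n 0 then C1 else C0.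

Definition Kaa (w : nat -> R) (a : Cx) : R :=
  Rseries_val (fun n => Cnorm2 a ^ n / w n).

Definition gcoef (w : nat -> R) (a alpha beta gamma : Cx) : nat -> Cx :=
  fun n => Cadd (Cadd (Cmul alpha (zcoef n)) (Cmul beta (onecoef n)))
                (Cmul gamma (Kcoef w a n)).

Definition B2num (w : nat -> R) (a : Cx) : nat -> Cx :=
  fun n => Csub (Cmul (RtoC (1 - Kaa w a)) (zcoef n))
                (Cmul a (Csub (onecoef n) (Kcoef w a n))).

Definition B2den (w : nat -> R) (a : Cx) : R :=
  sqrt ((Kaa w a - 1) * ((Kaa w a - 1) * w 1%nat - Cnorm2 a)).

Definition B2coef (w : nat -> R) (a : Cx) : nat -> Cx :=
  fun n => Cscal (/ B2den w a) (B2num w a n).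

(* Since omega_n conj((K_a)_n) = a^n, pairing any f with K_a gives f(a), so for
   g = alpha z + beta + gamma K_a the pairing <z^m g, g> equals
   conj(gamma) a^m g(a) plus the pairing with the polynomial part, which is 0 for
   m = 2 and omega_1 conj(alpha) g(0) for m = 1.  Innerness therefore forces
   g(a) = 0 and then g(0) = beta + gamma = 0.  These two linear conditions give
   a g = gamma B_2-numerator coefficientwise, and ||g|| = 1 fixes the modulus of
   the multiple. *)

From Pilot Require Import Defs.
From Stdlib Require Import Reals Lra Lia ClassicalEpsilon.
From Coquelicot Require Import Hierarchy Series.
Open Scope R_scope.

Lemma infinite_sum_ext u v l :
  (forall n, u n = v n) -> infinite_sum u l -> infinite_sum v l.
Proof.
  intros Huv Hu; apply is_series_Reals, is_series_ext with u; auto.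
  now apply is_series_Reals.
Qed.

Lemma infinite_sum_plus u v s t :
  infinite_sum u s -> infinite_sum v t -> infinite_sum (fun n => u n + v n) (s + t).
Proof.
  intros Hu%is_series_Reals Hv%is_series_Reals.
  exact (proj1 (is_series_Reals _ _) (is_series_plus _ _ _ _ Hu Hv)).
Qed.

Lemma infinite_sum_scal c u s :
  infinite_sum u s -> infinite_sum (fun n => c * u n) (c * s).
Proof.
  intros Hu%is_series_Reals.
  exact (proj1 (is_series_Reals _ _) (is_series_scal c _ _ Hu)).
Qed.

Lemma infinite_sum_unique u s t : infinite_sum u s -> infinite_sum u t -> s = t.
Proof.
  intros Hs%is_series_Reals Ht%is_series_Reals.
  now rewrite <- (is_series_unique _ _ Hs), <- (is_series_unique _ _ Ht).
Qed.

Lemma Rseries_val_eq u s : infinite_sum u s -> Rseries_val u = s.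
Proof.
  intros Hs; unfold Rseries_val; apply (infinite_sum_unique u); [|exact Hs].
  apply epsilon_spec; now exists s.
Qed.

Lemma infinite_sum_shift m v s : infinite_sum v s ->
  infinite_sum (fun n => if Nat.leb m n then v (n - m)%nat else 0) s.
Proof.
  revert v s; induction m as [|m IHm]; intros v s Hv.
  - apply infinite_sum_ext with v; [|exact Hv].
    intros n; simpl; now rewrite Nat.sub_0_r.
  - apply IHm, is_series_Reals in Hv.
    apply is_series_Reals, is_series_decr_1; simpl.
    change (plus s (opp 0)) with (s + - 0); rewrite Ropp_0, Rplus_0_r.
    exact Hv.
Qed.

Lemma infinite_sum_single k d :
  infinite_sum (fun n => if Nat.eqb n k then d else 0) d.
Proof.
  assert (H0 : infinite_sum (fun n => if Nat.eqb n 0 then d else 0) d).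
  { intros eps Heps; exists 0%nat; intros n _; unfold R_dist.
    replace (sum_f_R0 _ n) with d; [now rewrite Rminus_diag, Rabs_R0|].
    induction n as [|n IHn]; simpl; [reflexivity|]; rewrite <- IHn; ring. }
  apply infinite_sum_ext with (2 := infinite_sum_shift k _ _ H0); intros n.
  destruct (Nat.leb_spec k n), (Nat.eqb_spec n k);
    try destruct (Nat.eqb_spec (n - k) 0); try reflexivity; lia.
Qed.

Lemma infinite_sum_change_01 u v s : infinite_sum v s ->
  (forall k, u (S (S k)) = v (S (S k))) ->
  infinite_sum u (s + (u 0%nat - v 0%nat) + (u 1%nat - v 1%nat)).
Proof.
  intros Hv Huv.
  pose proof (infinite_sum_plus _ _ _ _ (infinite_sum_plus _ _ _ _ Hv
    (infinite_sum_single 0 (u 0%nat - v 0%nat))) (infinite_sum_single 1 (u 1%nat - v 1%nat))) as H.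
  apply infinite_sum_ext with (2 := H); intros [|[|k]]; simpl; try ring.
  rewrite Huv; ring.
Qed.

(* [Defs.C1] is qualified because [Reals] exports an unrelated [C1]. *)
Ltac Cx_expand :=
  repeat match goal with z : Cx |- _ => destruct z end;
  unfold Csub, Cadd, Copp, Cmul, Cscal, Cconj, Cnorm2, Defs.C0, Defs.C1, RtoC in *;
  simpl in *.

Definition Cinv (z : Cx) : Cx := Cscal (/ Cnorm2 z) (Cconj z).

Lemma Cpow_add z m n : Cpow z (m + n) = Cmul (Cpow z m) (Cpow z n).
Proof.
  induction m as [|m IHm]; simpl.
  - generalize (Cpow z n); intros; Cx_expand; f_equal; ring.
  - rewrite IHm; generalize (Cpow z m) (Cpow z n); intros; Cx_expand; f_equal; ring.
Qed.

Lemma Cconj_Cpow z n : Cconj (Cpow z n) = Cpow (Cconj z) n.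
Proof.
  induction n as [|n IHn]; simpl.
  - Cx_expand; f_equal; ring.
  - rewrite <- IHn; generalize (Cpow z n); intros; Cx_expand; f_equal; ring.
Qed.

Lemma Cpow_conj_mul z n : Cmul (Cpow (Cconj z) n) (Cpow z n) = RtoC (Cnorm2 z ^ n).
Proof.
  induction n as [|n IHn]; simpl.
  - Cx_expand; f_equal; ring.
  - revert IHn; generalize (Cpow (Cconj z) n) (Cpow z n) (Cnorm2 z ^ n).
    intros p q r E; Cx_expand; injection E; intros; f_equal; nra.
Qed.

Lemma Cnorm2_Cmul z u : Cnorm2 (Cmul z u) = Cnorm2 z * Cnorm2 u.
Proof. Cx_expand; ring. Qed.

Lemma Cnorm2_Cscal r z : Cnorm2 (Cscal r z) = r * r * Cnorm2 z.
Proof. Cx_expand; ring. Qed.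

Lemma Cnorm2_Cconj z : Cnorm2 (Cconj z) = Cnorm2 z.
Proof. Cx_expand; ring. Qed.

Lemma Cnorm2_Cpow z n : Cnorm2 (Cpow z n) = Cnorm2 z ^ n.
Proof.
  induction n as [|n IHn]; simpl; [Cx_expand; ring|].
  now rewrite Cnorm2_Cmul, IHn.
Qed.

Lemma Cnorm2_ge0 z : 0 <= Cnorm2 z.
Proof. Cx_expand; nra. Qed.

Lemma Cnorm2_eq0 z : Cnorm2 z = 0 -> z = C0.
Proof. Cx_expand; intros H; f_equal; nra. Qed.

Lemma Cnorm2_pos z : z <> C0 -> 0 < Cnorm2 z.
Proof.
  intros Hz; destruct (Cnorm2_ge0 z) as [|H]; [assumption|].
  now contradiction (Cnorm2_eq0 z (eq_sym H)).
Qed.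

Lemma Cmul_eq0_r z u : 0 < Cnorm2 z -> Cmul z u = C0 -> u = C0.
Proof.
  intros Hz Hzu; apply Cnorm2_eq0.
  assert (H : Cnorm2 (Cmul z u) = 0) by (rewrite Hzu; Cx_expand; ring).
  rewrite Cnorm2_Cmul in H; pose proof (Cnorm2_ge0 u); nra.
Qed.

Lemma Cmul_assoc z u v : Cmul (Cmul z u) v = Cmul z (Cmul u v).
Proof. Cx_expand; f_equal; ring. Qed.

Lemma Cmul_Cscal_Cscal_inv r z u : r <> 0 -> Cmul (Cscal r z) (Cscal (/ r) u) = Cmul z u.
Proof. intros Hr; Cx_expand; f_equal; field; exact Hr. Qed.

Lemma Cmul_Cinv_l z u : z <> C0 -> Cmul (Cinv z) (Cmul z u) = u.
Proof.
  intros Hz%Cnorm2_pos; unfold Cinv; Cx_expand; f_equal; field; lra.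
Qed.

Lemma Csum_is_ext u v s : (forall n, u n = v n) -> Csum_is u s -> Csum_is v s.
Proof.
  intros Huv [H1 H2]; split.
  - apply infinite_sum_ext with (2 := H1); intros n; now rewrite Huv.
  - apply infinite_sum_ext with (2 := H2); intros n; now rewrite Huv.
Qed.

Lemma Csum_is_plus u v s t : Csum_is u s -> Csum_is v t ->
  Csum_is (fun n => Cadd (u n) (v n)) (Cadd s t).
Proof. intros [H1 H2] [H3 H4]; split; now apply infinite_sum_plus. Qed.

Lemma Csum_is_mul c u s : Csum_is u s -> Csum_is (fun n => Cmul c (u n)) (Cmul c s).
Proof.
  intros [H1 H2]; split; simpl.
  - replace (fst c * fst s - snd c * snd s) with (fst c * fst s + - snd c * snd s) by ring.
    apply infinite_sum_ext with (2 := infinite_sum_plus _ _ _ _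
      (infinite_sum_scal (fst c) _ _ H1) (infinite_sum_scal (- snd c) _ _ H2)).
    intros n; ring.
  - apply infinite_sum_ext with (2 := infinite_sum_plus _ _ _ _
      (infinite_sum_scal (fst c) _ _ H2) (infinite_sum_scal (snd c) _ _ H1)).
    intros n; ring.
Qed.

Lemma Csum_is_unique u s t : Csum_is u s -> Csum_is u t -> s = t.
Proof.
  intros [H1 H2] [H3 H4]; destruct s, t; simpl in *.
  f_equal; eapply infinite_sum_unique; eauto.
Qed.

Lemma Csum_is_shift m v s : Csum_is v s ->
  Csum_is (fun n => if Nat.leb m n then v (n - m)%nat else C0) s.
Proof.
  intros [H1 H2]; split.
  - apply infinite_sum_ext with (2 := infinite_sum_shift m _ _ H1).
    intros n; now destruct (Nat.leb m n).
  - apply infinite_sum_ext with (2 := infinite_sum_shift m _ _ H2).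
    intros n; now destruct (Nat.leb m n).
Qed.

Lemma Csum_is_single k d : Csum_is (fun n => if Nat.eqb n k then d else C0) d.
Proof.
  split.
  - apply infinite_sum_ext with (2 := infinite_sum_single k (fst d)).
    intros n; now destruct (Nat.eqb n k).
  - apply infinite_sum_ext with (2 := infinite_sum_single k (snd d)).
    intros n; now destruct (Nat.eqb n k).
Qed.

Lemma Csum_is_RtoC u s : infinite_sum u s -> Csum_is (fun n => RtoC (u n)) (RtoC s).
Proof.
  intros Hu; split; simpl; [exact Hu|].
  apply infinite_sum_ext with (2 := infinite_sum_single 0 0); intros n.
  now destruct (Nat.eqb n 0).
Qed.

Lemma eval_is_plus f g z s t : eval_is f z s -> eval_is g z t ->
  eval_is (fun n => Cadd (f n) (g n)) z (Cadd s t).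
Proof.
  intros Hf Hg; apply Csum_is_ext with (2 := Csum_is_plus _ _ _ _ Hf Hg).
  intros n; generalize (f n) (g n) (Cpow z n); intros; Cx_expand; f_equal; ring.
Qed.

Lemma eval_is_mul c f z s : eval_is f z s -> eval_is (fun n => Cmul c (f n)) z (Cmul c s).
Proof.
  intros Hf; apply Csum_is_ext with (2 := Csum_is_mul c _ _ Hf).
  intros n; generalize (f n) (Cpow z n); intros; Cx_expand; f_equal; ring.
Qed.

Lemma eval_is_zcoef z : eval_is zcoef z z.
Proof.
  apply Csum_is_ext with (2 := Csum_is_single 1 z).
  intros [|[|n]]; simpl; [| |generalize (Cpow z n)]; intros; Cx_expand; f_equal; ring.
Qed.

Lemma eval_is_onecoef z : eval_is onecoef z Defs.C1.
Proof.
  apply Csum_is_ext with (2 := Csum_is_single 0 Defs.C1).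
  intros [|n]; simpl; [|generalize (Cpow z n)]; intros; Cx_expand; f_equal; ring.
Qed.

Lemma eval_is_zshift m f z s :
  eval_is f z s -> eval_is (zshift m f) z (Cmul (Cpow z m) s).
Proof.
  intros Hf; apply Csum_is_ext with (2 := Csum_is_shift m _ _ (Csum_is_mul (Cpow z m) _ _ Hf)).
  intros n; unfold zshift; destruct (Nat.leb_spec m n).
  - replace (Cpow z n) with (Cpow z (m + (n - m))) by (f_equal; lia).
    rewrite Cpow_add.
    generalize (f (n - m)%nat) (Cpow z m) (Cpow z (n - m)); intros; Cx_expand; f_equal; ring.
  - generalize (Cpow z n); intros; Cx_expand; f_equal; ring.
Qed.

Lemma inner_is_plus_r w f g h c d : inner_is w f g c -> inner_is w f h d ->
  inner_is w f (fun n => Cadd (g n) (h n)) (Cadd c d).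
Proof.
  intros Hg Hh; apply Csum_is_ext with (2 := Csum_is_plus _ _ _ _ Hg Hh).
  intros n; generalize (f n) (g n) (h n); intros; Cx_expand; f_equal; ring.
Qed.

Lemma inner_is_mul_r w f g c d : inner_is w f g d ->
  inner_is w f (fun n => Cmul c (g n)) (Cmul (Cconj c) d).
Proof.
  intros Hg; apply Csum_is_ext with (2 := Csum_is_mul (Cconj c) _ _ Hg).
  intros n; generalize (f n) (g n); intros; Cx_expand; f_equal; ring.
Qed.

Lemma inner_is_zcoef w f : inner_is w f zcoef (Cscal (w 1%nat) (f 1%nat)).
Proof.
  apply Csum_is_ext with (2 := Csum_is_single 1 _).
  intros [|[|n]]; simpl;
    [generalize (f 0%nat) | generalize (f 1%nat) | generalize (f (S (S n)))];
    intros; Cx_expand; f_equal; ring.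
Qed.

Lemma inner_is_onecoef w f : inner_is w f onecoef (Cscal (w 0%nat) (f 0%nat)).
Proof.
  apply Csum_is_ext with (2 := Csum_is_single 0 _).
  intros [|n]; simpl; [generalize (f 0%nat) | generalize (f (S n))];
    intros; Cx_expand; f_equal; ring.
Qed.

Lemma weighted_norm_Kcoef w a n :
  w n <> 0 -> w n * Cnorm2 (Kcoef w a n) = Cnorm2 a ^ n / w n.
Proof.
  intros Hw; unfold Kcoef; rewrite Cnorm2_Cscal, Cnorm2_Cpow, Cnorm2_Cconj.
  field; exact Hw.
Qed.

Lemma eval_is_Kcoef w a K : infinite_sum (fun n => Cnorm2 a ^ n / w n) K ->
  eval_is (Kcoef w a) a (RtoC K).
Proof.
  intros HK; apply Csum_is_ext with (2 := Csum_is_RtoC _ _ HK).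
  intros n; unfold Kcoef.
  replace (Cmul (Cscal (/ w n) (Cpow (Cconj a) n)) (Cpow a n))
    with (Cscal (/ w n) (Cmul (Cpow (Cconj a) n) (Cpow a n)))
    by (generalize (Cpow (Cconj a) n) (Cpow a n); intros; Cx_expand; f_equal; ring).
  rewrite Cpow_conj_mul; Cx_expand; f_equal; unfold Rdiv; ring.
Qed.

(* The reproducing property [<f, K_a> = f(a)]: [omega_n conj((K_a)_n) = a^n]. *)
Lemma inner_is_Kcoef w a f s : (forall n, w n <> 0) -> eval_is f a s ->
  inner_is w f (Kcoef w a) s.
Proof.
  intros Hw Hf; apply Csum_is_ext with (2 := Hf); intros n; unfold Kcoef.
  rewrite <- (Cconj_Cpow a n); generalize (Hw n) (f n) (Cpow a n).
  intros Hwn; intros; Cx_expand; f_equal; field; exact Hwn.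
Qed.

Lemma gcoef_0 w a alpha beta gamma :
  w 0%nat = 1 -> gcoef w a alpha beta gamma 0%nat = Cadd beta gamma.
Proof.
  intros hw0; unfold gcoef, zcoef, onecoef, Kcoef; simpl; rewrite hw0, Rinv_1.
  Cx_expand; f_equal; ring.
Qed.

Lemma gcoef_SS w a alpha beta gamma k :
  gcoef w a alpha beta gamma (S (S k)) = Cmul gamma (Kcoef w a (S (S k))).
Proof.
  unfold gcoef, zcoef, onecoef; simpl.
  generalize (Kcoef w a (S (S k))); intros; Cx_expand; f_equal; ring.
Qed.

Lemma eval_is_gcoef w a alpha beta gamma K :
  infinite_sum (fun n => Cnorm2 a ^ n / w n) K ->
  eval_is (gcoef w a alpha beta gamma) a
    (Cadd (Cadd (Cmul alpha a) (Cmul beta Defs.C1)) (Cmul gamma (RtoC K))).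
Proof.
  intros HK; apply eval_is_plus; [apply eval_is_plus|]; apply eval_is_mul.
  - apply eval_is_zcoef.
  - apply eval_is_onecoef.
  - now apply eval_is_Kcoef.
Qed.

Lemma inner_is_gcoef w a alpha beta gamma f s :
  (forall n, w n <> 0) -> eval_is f a s ->
  inner_is w f (gcoef w a alpha beta gamma)
    (Cadd (Cadd (Cmul (Cconj alpha) (Cscal (w 1%nat) (f 1%nat)))
                (Cmul (Cconj beta) (Cscal (w 0%nat) (f 0%nat))))
          (Cmul (Cconj gamma) s)).
Proof.
  intros Hw Hf; apply inner_is_plus_r; [apply inner_is_plus_r|]; apply inner_is_mul_r.
  - apply inner_is_zcoef.
  - apply inner_is_onecoef.
  - now apply inner_is_Kcoef.
Qed.

Lemma inner_gcoef_eval_eq0 w a alpha beta gamma s :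
  (forall n, w n <> 0) -> a <> C0 -> gamma <> C0 ->
  is_inner w (gcoef w a alpha beta gamma) ->
  eval_is (gcoef w a alpha beta gamma) a s -> s = C0.
Proof.
  intros Hw Ha Hg [_ Horth] Hs.
  pose proof (inner_is_gcoef w a alpha beta gamma _ _ Hw (eval_is_zshift 2 _ _ _ Hs)) as H2.
  pose proof (Csum_is_unique _ _ _ H2 (Horth 2%nat ltac:(lia))) as E.
  cbn [zshift Nat.leb] in E.
  apply (Cmul_eq0_r (Cmul (Cconj gamma) (Cpow a 2))).
  - rewrite Cnorm2_Cmul, Cnorm2_Cconj, Cnorm2_Cpow.
    apply Rmult_lt_0_compat; [|apply pow_lt]; now apply Cnorm2_pos.
  - rewrite <- E; Cx_expand; f_equal; ring.
Qed.

Lemma inner_gcoef_0_eq0 w a alpha beta gamma :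
  (forall n, 0 < w n) -> alpha <> C0 ->
  is_inner w (gcoef w a alpha beta gamma) ->
  eval_is (gcoef w a alpha beta gamma) a C0 -> gcoef w a alpha beta gamma 0%nat = C0.
Proof.
  intros Hw Hal [_ Horth] Hs.
  assert (Hw' : forall n, w n <> 0) by (intros n; pose proof (Hw n); lra).
  pose proof (inner_is_gcoef w a alpha beta gamma _ _ Hw' (eval_is_zshift 1 _ _ _ Hs)) as H1.
  pose proof (Csum_is_unique _ _ _ H1 (Horth 1%nat ltac:(lia))) as E.
  cbn [zshift Nat.leb Nat.sub] in E.
  apply (Cmul_eq0_r (Cscal (w 1%nat) (Cconj alpha))).
  - rewrite Cnorm2_Cscal, Cnorm2_Cconj.
    pose proof (Hw 1%nat); pose proof (Cnorm2_pos _ Hal).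
    apply Rmult_lt_0_compat; [apply Rmult_lt_0_compat|]; assumption.
  - rewrite <- E; generalize (gcoef w a alpha beta gamma 0%nat); intros; Cx_expand.
    f_equal; ring.
Qed.

Lemma Kaa_series w a alpha beta gamma l :
  (forall n, w n <> 0) -> gamma <> C0 ->
  infinite_sum (fun n => w n * Cnorm2 (gcoef w a alpha beta gamma n)) l ->
  infinite_sum (fun n => Cnorm2 a ^ n / w n) (Kaa w a).
Proof.
  intros Hw Hg Hl; pose proof (Cnorm2_pos _ Hg) as Hg2.
  assert (HK : exists K, infinite_sum (fun n => Cnorm2 a ^ n / w n) K).
  { eexists; apply (infinite_sum_change_01 _ _ _ (infinite_sum_scal (/ Cnorm2 gamma) _ _ Hl)).
    intros k; rewrite gcoef_SS, Cnorm2_Cmul, <- weighted_norm_Kcoef by apply Hw.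
    field; lra. }
  destruct HK as [K HK]; unfold Kaa; now rewrite (Rseries_val_eq _ _ HK).
Qed.

Lemma Cmul_gcoef_B2num w a alpha beta gamma :
  w 0%nat = 1 -> Cmul alpha a = Cmul gamma (RtoC (1 - Kaa w a)) -> Cadd beta gamma = C0 ->
  forall n, Cmul a (gcoef w a alpha beta gamma n) = Cmul gamma (B2num w a n).
Proof.
  intros hw0 Hal Hbg [|[|k]].
  - rewrite gcoef_0, Hbg by exact hw0.
    unfold B2num, zcoef, onecoef, Kcoef; simpl; rewrite hw0, Rinv_1.
    generalize (Kaa w a); intros; Cx_expand; f_equal; ring.
  - transitivity (Cadd (Cmul alpha a) (Cmul gamma (Cscal (/ w 1%nat) (Cmul a (Cconj a))))).
    { unfold gcoef, zcoef, onecoef, Kcoef; simpl; Cx_expand; f_equal; ring. }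
    rewrite Hal; unfold B2num, zcoef, onecoef, Kcoef; simpl.
    generalize (Kaa w a); intros; Cx_expand; f_equal; ring.
  - rewrite gcoef_SS; unfold B2num, zcoef, onecoef; simpl.
    generalize (Kcoef w a (S (S k))) (Kaa w a); intros; Cx_expand; f_equal; ring.
Qed.

Definition B2norm2 (w : nat -> R) (a : Cx) : R :=
  (Kaa w a - 1) * ((Kaa w a - 1) * w 1%nat - Cnorm2 a).

Lemma B2num_norm_series w a : (forall n, w n <> 0) -> w 0%nat = 1 ->
  infinite_sum (fun n => Cnorm2 a ^ n / w n) (Kaa w a) ->
  infinite_sum (fun n => w n * Cnorm2 (B2num w a n)) (B2norm2 w a).
Proof.
  intros Hw hw0 HK.
  pose proof (infinite_sum_change_01 (fun n => w n * Cnorm2 (B2num w a n)) _ _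
    (infinite_sum_scal (Cnorm2 a) _ _ HK)) as H.
  match type of H with _ -> infinite_sum _ ?s => replace (B2norm2 w a) with s end.
  - apply H; intros k.
    replace (B2num w a (S (S k))) with (Cmul a (Kcoef w a (S (S k)))).
    + rewrite Cnorm2_Cmul, <- weighted_norm_Kcoef by apply Hw.
      ring.
    + unfold B2num, zcoef, onecoef; simpl.
      generalize (Kcoef w a (S (S k))) (Kaa w a); intros; Cx_expand; f_equal; ring.
  - unfold B2norm2, B2num, zcoef, onecoef, Kcoef; simpl; rewrite hw0.
    generalize (Kaa w a) (w 1%nat) (Hw 1%nat); intros K w1 Hw1; Cx_expand; field; exact Hw1.
Qed.

Theorem mainTheorem14
  (w : nat -> R)
  (hw_pos : forall n : nat, 0 < w n)
  (hw0 : w 0%nat = 1)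
  (hw_ratio : Un_cv (fun n => w (S n) / w n) 1)
  (a alpha beta gamma : Cx)
  (ha_ne0 : a <> C0) (ha_disc : Cmod a < 1)
  (halpha : alpha <> C0) (hgamma : gamma <> C0)
  (hinner : is_inner w (gcoef w a alpha beta gamma)) :
  eval_is (gcoef w a alpha beta gamma) a C0 /\
  Cadd beta gamma = C0 /\
  (exists c : Cx, Cmod c = 1 /\
     forall n : nat, gcoef w a alpha beta gamma n = Cmul c (B2coef w a n)) /\
  hnorm w (B2num w a) = B2den w a.
Proof.
  assert (Hw : forall n, w n <> 0) by (intros n; pose proof (hw_pos n); lra).
  pose proof hinner as [Hnorm _].
  pose proof (Kaa_series _ _ _ _ _ _ Hw hgamma Hnorm) as HK.
  pose proof (eval_is_gcoef w a alpha beta gamma _ HK) as Heval.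
  pose proof (inner_gcoef_eval_eq0 _ _ _ _ _ _ Hw ha_ne0 hgamma hinner Heval) as Hga.
  rewrite Hga in Heval.
  assert (Hbg : Cadd beta gamma = C0).
  { rewrite <- (gcoef_0 w a alpha beta gamma hw0); now apply inner_gcoef_0_eq0. }
  assert (Hal : Cmul alpha a = Cmul gamma (RtoC (1 - Kaa w a))).
  { clear - Hga Hbg; Cx_expand; injection Hga; injection Hbg; intros; f_equal; nra. }
  set (e := Cmul (Cinv a) gamma).
  assert (Hg : forall n, gcoef w a alpha beta gamma n = Cmul e (B2num w a n)).
  { intros n; rewrite <- (Cmul_Cinv_l a (gcoef w a alpha beta gamma n) ha_ne0), Cmul_gcoef_B2num by assumption.
    unfold e; now rewrite Cmul_assoc. }
  pose proof (B2num_norm_series w a Hw hw0 HK) as HB.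
  assert (He : Cnorm2 e * B2norm2 w a = 1).
  { apply (infinite_sum_unique (fun n => w n * Cnorm2 (gcoef w a alpha beta gamma n)));
      [|exact Hnorm].
    apply infinite_sum_ext with (2 := infinite_sum_scal (Cnorm2 e) _ _ HB).
    intros n; rewrite Hg, Cnorm2_Cmul; ring. }
  assert (HT : 0 < B2norm2 w a) by (pose proof (Cnorm2_ge0 e); nra).
  assert (HD : 0 < B2den w a) by now apply sqrt_lt_R0.
  split; [exact Heval|]; split; [exact Hbg|]; split.
  - exists (Cscal (B2den w a) e); split.
    + unfold Cmod; rewrite Cnorm2_Cscal; unfold B2den; fold (B2norm2 w a).
      rewrite sqrt_sqrt, Rmult_comm, He by lra; exact sqrt_1.
    + intros n; unfold B2coef; rewrite Cmul_Cscal_Cscal_inv by lra; apply Hg.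
  - unfold hnorm; now rewrite (Rseries_val_eq _ _ HB).
Qed.
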